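(* (a) If $\eta_{ss}$ is smooth and $G$ is the Green function defined by $G_{ss}(s,x)-\lvert\eta_{ss}(s)\rvert^2G(s,x)=-\delta(s-x)$, $G(0,x)=0$, $G_s(1,x)=0$, then $\sup_{0\le s,x\le1}\lvert G_s(s,x)\rvert\le1$ and $\sup_{0<s\le 1,\,0\le x\le1}G(s,x)/s\le1$. (b) Let $n\in\mathbb{N}$, $\eta_1,\dots,\eta_{n+1}\in\mathbb{R}^d$ with $\eta_{n+1}=0$ and $\lvert(\nabla_+\eta)_k\rvert=1$ for $1\le k\le n$, and assume $\alpha_k=\langle(\nabla_+\eta)_{k+1},(\nabla_+\eta)_k\rangle\ge0$ for $1\le k\le n-1$. Let $G_{kj}$ be the discrete Green function $G_{kj}=\frac1n\sum_{i=1}^{\min\{j,k\}}\frac{p_{ij}p_{ik}}{\beta_i}$, $p_{ij}=\prod_{m=i}^{j-1}\frac{\alpha_m}{\beta_{m+1}}$, $\beta_n=1$, $\beta_i=2-\alpha_i^2/\beta_{i+1}$, and set $G_{0j}=0$. Then for all $1\le j,k\le n$: $\lvert n(G_{kj}-G_{k-1,j})\rvert\le1$ and $nG_{kj}/k\le1$.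
   Context: $(\nabla_+f)_k=n(f_{k+1}-f_k)$; empty products equal $1$. $\delta$ is the Dirac delta. *)

From Stdlib Require Export Reals.
Open Scope R_scope.

Fixpoint sumR (n : nat) (f : nat -> R) : R :=
  match n with O => 0 | S m => sumR m f + f m end.
Fixpoint prodR (n : nat) (f : nat -> R) : R :=
  match n with O => 1 | S m => prodR m f * f m end.

(* vectors of R^d are represented by their coordinate functions nat -> R,
   only the coordinates 0..d-1 matter *)
Definition dotR (d : nat) (u v : nat -> R) : R := sumR d (fun c => u c * v c).
Definition normR (d : nat) (u : nat -> R) : R := sqrt (dotR d u u).

Fixpoint Ck (k : nat) (f : R -> R) : Prop :=
  match k with
  | O => continuity f
  | S k' => exists f' : R -> R, (forall s, derivable_pt_lim f s (f' s)) /\ Ck k' f'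
  end.
Definition smooth (f : R -> R) : Prop := forall k, Ck k f.

(* [is_Green_section q x g a a' b b'] : the function g = G(.,x) is the Green
   function of  g'' - q g = -delta(. - x),  g(0) = 0,  g'(1) = 0  on [0,1]:
   on [0,x] it coincides with a solution a of a'' = q a, on [x,1] with a
   solution b of b'' = q b (a', b' being their derivatives), g(0) = 0, g_s(1) = 0,
   g is continuous at x (a x = b x = g x) and the derivative jumps by -1 at x:
   g_s(x+) - g_s(x-) = b' x - a' x = -1. *)
Definition is_Green_section (q : R -> R) (x : R) (g a a' b b' : R -> R) : Prop :=
  (forall s, derivable_pt_lim a s (a' s)) /\
  (forall s, derivable_pt_lim a' s (q s * a s)) /\
  (forall s, derivable_pt_lim b s (b' s)) /\
  (forall s, derivable_pt_lim b' s (q s * b s)) /\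
  (forall s, 0 <= s <= x -> g s = a s) /\
  (forall s, x <= s <= 1 -> g s = b s) /\
  g 0 = 0 /\ b' 1 = 0 /\
  b' x - a' x = -1.

Definition is_Green (q : R -> R) (G : R -> R -> R) : Prop :=
  forall x, 0 <= x <= 1 ->
    exists a a' b b', is_Green_section q x (fun s => G s x) a a' b b'.

(* eta : nat -> (nat -> R), eta k = eta_k in R^d (coordinates 0..d-1) *)
Definition gradp (n : nat) (eta : nat -> nat -> R) (k : nat) : nat -> R :=
  fun c => INR n * (eta (S k) c - eta k c).

Definition alphaD (d n : nat) (eta : nat -> nat -> R) (k : nat) : R :=
  dotR d (gradp n eta (S k)) (gradp n eta k).

(* betaRev t = beta_{n-t}:  beta_n = 1,  beta_i = 2 - alpha_i^2 / beta_{i+1} *)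
Fixpoint betaRev (n : nat) (alpha : nat -> R) (t : nat) : R :=
  match t with
  | O => 1
  | S t' => 2 - (alpha (n - S t')%nat) ^ 2 / betaRev n alpha t'
  end.
Definition betaD (n : nat) (alpha : nat -> R) (i : nat) : R :=
  betaRev n alpha (n - i).

Definition pD (n : nat) (alpha : nat -> R) (i j : nat) : R :=
  prodR (j - i) (fun t => alpha (i + t)%nat / betaD n alpha (S (i + t))).

Definition GD (n : nat) (alpha : nat -> R) (k j : nat) : R :=
  match k with
  | O => 0
  | _ => / INR n * sumR (Nat.min j k)
           (fun t => pD n alpha (S t) j * pD n alpha (S t) k / betaD n alpha (S t))
  end.

(* (a) On each side of the pole x the section G(.,x) solves y'' = q y with
   q = |eta_ss|^2 >= 0.  For such y the flux y y' is nondecreasing, so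
   y y' >= 0 to the right of a zero of y (left piece a, a(0) = 0) and
   y y' <= 0 to the left of a zero of y' (right piece b, b'(1) = 0).  The
   flux signs make a'^2 nondecreasing on [0,x] and b'^2 nonincreasing on
   [x,1], so both are controlled by the one-sided slopes at the pole, and
   the jump condition b'(x) = a'(x) - 1 together with the flux signs forces
   0 <= a'(x) <= 1.  Integrating the slope bound from 0 gives G(s,x) <= s.

   (b) The hypotheses give 0 <= alpha_m <= 1, hence beta_i >= 1 and the
   ratios r_m = alpha_m / beta_{m+1} lie in [0,1].  Writing S_k = n G_kk,
   one has n G_kj = p_kj S_k for k <= j and n G_kj = p_jk S_j for k >= j,
   together with S_{k+1} = r_k^2 S_k + 1/beta_{k+1}.  An induction on the
   backward recursion of beta gives S_k (1 - r_k) <= 1; from it each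
   increment n G_kj - n G_{k-1,j} lies in [-1,1], and summing the
   increments yields n G_kj <= k. *)
From Stdlib Require Import Reals Lra Lia Psatz.
Open Scope R_scope.

Lemma nondecreasing_of_nonneg_deriv (f f' : R -> R) (u v : R) : u <= v ->
  (forall c, u <= c <= v -> derivable_pt_lim f c (f' c)) ->
  (forall c, u < c < v -> 0 <= f' c) -> f u <= f v.
Proof.
  intros Huv Hd Hpos. destruct (Req_dec u v) as [->|Hne]; [lra|].
  destruct (MVT_cor2 f f' u v ltac:(lra) Hd) as (c & Hc & Hcuv).
  specialize (Hpos c Hcuv). nra.
Qed.

Lemma nonincreasing_of_nonpos_deriv (f f' : R -> R) (u v : R) : u <= v ->
  (forall c, u <= c <= v -> derivable_pt_lim f c (f' c)) ->
  (forall c, u < c < v -> f' c <= 0) -> f v <= f u.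
Proof.
  intros Huv Hd Hneg.
  assert (H := nondecreasing_of_nonneg_deriv (fun t => - f t) (fun t => - f' t) u v Huv).
  cut (- f u <= - f v); [lra|]. apply H.
  - intros c Hc. exact (derivable_pt_lim_opp f c (f' c) (Hd c Hc)).
  - intros c Hc. specialize (Hneg c Hc). lra.
Qed.

Lemma increment_le_of_slope_le_1 (f f' : R -> R) (u v : R) : u <= v ->
  (forall c, u <= c <= v -> derivable_pt_lim f c (f' c)) ->
  (forall c, u < c < v -> Rabs (f' c) <= 1) -> f v - f u <= v - u.
Proof.
  intros Huv Hd Hslope.
  assert (H := nondecreasing_of_nonneg_deriv (fun t => t - f t) (fun t => 1 - f' t) u v Huv).
  cut (u - f u <= v - f v); [lra|]. apply H.
  - intros c Hc. exact (derivable_pt_lim_minus id f c 1 (f' c)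
                          (derivable_pt_lim_id c) (Hd c Hc)).
  - intros c Hc. specialize (Hslope c Hc). pose proof (Rle_abs (f' c)). lra.
Qed.

Lemma sq_nondecreasing (f f' : R -> R) (u v : R) : u <= v ->
  (forall c, u <= c <= v -> derivable_pt_lim f c (f' c)) ->
  (forall c, u < c < v -> 0 <= f c * f' c) -> f u * f u <= f v * f v.
Proof.
  intros Huv Hd Hsign.
  apply (nondecreasing_of_nonneg_deriv (fun t => f t * f t)
           (fun t => f' t * f t + f t * f' t) u v Huv).
  - intros c Hc. exact (derivable_pt_lim_mult f f c _ _ (Hd c Hc) (Hd c Hc)).
  - intros c Hc. specialize (Hsign c Hc). lra.
Qed.

Lemma sq_nonincreasing (f f' : R -> R) (u v : R) : u <= v ->
  (forall c, u <= c <= v -> derivable_pt_lim f c (f' c)) ->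
  (forall c, u < c < v -> f c * f' c <= 0) -> f v * f v <= f u * f u.
Proof.
  intros Huv Hd Hsign.
  apply (nonincreasing_of_nonpos_deriv (fun t => f t * f t)
           (fun t => f' t * f t + f t * f' t) u v Huv).
  - intros c Hc. exact (derivable_pt_lim_mult f f c _ _ (Hd c Hc) (Hd c Hc)).
  - intros c Hc. specialize (Hsign c Hc). lra.
Qed.

Lemma deriv_zero_of_vanishing_right (f : R -> R) (x y l : R) : x < y ->
  derivable_pt_lim f x l -> (forall s, x <= s <= y -> f s = 0) -> l = 0.
Proof.
  intros Hxy Hd Hzero. destruct (Req_dec l 0) as [|Hl]; [assumption|exfalso].
  destruct (Hd (Rabs l) (Rabs_pos_lt _ Hl)) as [del Hdel].
  pose proof (cond_pos del) as Hdel_pos.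
  pose proof (Rmin_l del (y - x)). pose proof (Rmin_r del (y - x)).
  pose proof (Rmin_pos del (y - x) Hdel_pos ltac:(lra)).
  set (h := Rmin del (y - x) / 2).
  assert (Hh : 0 < h) by (unfold h; lra).
  assert (Habs : Rabs h < del) by (rewrite Rabs_right; unfold h; lra).
  specialize (Hdel h ltac:(lra) Habs).
  rewrite (Hzero (x + h)), (Hzero x) in Hdel by (unfold h; lra).
  replace ((0 - 0) / h - l) with (- l) in Hdel by (field; lra).
  rewrite Rabs_Ropp in Hdel. lra.
Qed.

Lemma abs_le_1_of_sq_le_1 (u : R) : u * u <= 1 -> Rabs u <= 1.
Proof. intros H. apply Rabs_le. nra. Qed.

(* Solutions of y'' = q y with q >= 0: the flux y y' is nondecreasing,
   since (y y')' = y'^2 + q y^2. *)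
Section NonnegativePotential.
Variables (q y y' : R -> R).
Hypothesis Hq : forall s, 0 <= q s.
Hypothesis Hy : forall s, derivable_pt_lim y s (y' s).
Hypothesis Hy' : forall s, derivable_pt_lim y' s (q s * y s).

Lemma flux_nondecreasing (s t : R) : s <= t -> y s * y' s <= y t * y' t.
Proof.
  intros Hst.
  apply (nondecreasing_of_nonneg_deriv (fun c => y c * y' c)
           (fun c => y' c * y' c + y c * (q c * y c)) s t Hst).
  - intros c _. exact (derivable_pt_lim_mult y y' c _ _ (Hy c) (Hy' c)).
  - intros c _. specialize (Hq c). nra.
Qed.

End NonnegativePotential.

Section GreenSection.
Variables (q a a' b b' : R -> R) (x : R).
Hypothesis Hq : forall s, 0 <= q s.
Hypothesis Hx : 0 <= x <= 1.
Hypothesis Ha : forall s, derivable_pt_lim a s (a' s).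
Hypothesis Ha' : forall s, derivable_pt_lim a' s (q s * a s).
Hypothesis Hb : forall s, derivable_pt_lim b s (b' s).
Hypothesis Hb' : forall s, derivable_pt_lim b' s (q s * b s).
Hypothesis Ha0 : a 0 = 0.
Hypothesis Hb1 : b' 1 = 0.
Hypothesis Hcont : a x = b x.
Hypothesis Hjump : b' x - a' x = -1.

Lemma flux_left (s : R) : 0 <= s -> 0 <= a s * a' s.
Proof.
  intros Hs. pose proof (flux_nondecreasing q a a' Hq Ha Ha' 0 s Hs). nra.
Qed.

Lemma flux_right (s : R) : s <= 1 -> b s * b' s <= 0.
Proof.
  intros Hs. pose proof (flux_nondecreasing q b b' Hq Hb Hb' s 1 Hs). nra.
Qed.

Lemma slope_at_pole : 0 <= a' x <= 1.
Proof.
  pose proof (flux_left x ltac:(lra)) as Fa.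
  pose proof (flux_right x ltac:(lra)) as Fb.
  replace (b' x) with (a' x - 1) in Fb by lra. rewrite <- Hcont in Fb.
  destruct (Rtotal_order (a x) 0) as [Hneg|[Hzero|Hpos]]; [nra| |nra].
  (* a x = 0: b^2 decreases on [x,1] from b x = 0, so b vanishes there *)
  assert (Hb'x : b' x = 0).
  { destruct (Req_dec x 1) as [->|Hx1]; [exact Hb1|].
    apply (deriv_zero_of_vanishing_right b x 1); [lra|apply Hb|].
    intros s Hs.
    pose proof (sq_nonincreasing b b' x s ltac:(lra) (fun c _ => Hb c)
                  (fun c Hc => flux_right c ltac:(lra))).
    rewrite <- Hcont, Hzero in *. nra. }
  lra.
Qed.

(* (a'^2)' = 2 q a a' >= 0 on [0,x]. *)
Lemma slope_bound_left (s : R) : 0 <= s <= x -> Rabs (a' s) <= 1.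
Proof.
  intros Hs. apply abs_le_1_of_sq_le_1.
  assert (H := sq_nondecreasing a' (fun c => q c * a c) s x ltac:(lra) (fun c _ => Ha' c)).
  assert (a' s * a' s <= a' x * a' x).
  { apply H. intros c Hc. pose proof (Hq c). pose proof (flux_left c ltac:(lra)). nra. }
  pose proof slope_at_pole. nra.
Qed.

(* (b'^2)' = 2 q b b' <= 0 on [x,1], and b'(x) = a'(x) - 1. *)
Lemma slope_bound_right (s : R) : x <= s <= 1 -> Rabs (b' s) <= 1.
Proof.
  intros Hs. apply abs_le_1_of_sq_le_1.
  assert (H := sq_nonincreasing b' (fun c => q c * b c) x s ltac:(lra) (fun c _ => Hb' c)).
  assert (b' s * b' s <= b' x * b' x).
  { apply H. intros c Hc. pose proof (Hq c). pose proof (flux_right c ltac:(lra)). nra. }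
  pose proof slope_at_pole. replace (b' x) with (a' x - 1) in * by lra. nra.
Qed.

(* Integrating the slope bound from a(0) = 0: both pieces stay below the
   diagonal, which is the estimate G(s,x) <= s. *)
Lemma pieces_below_diagonal (s : R) : 0 <= s <= 1 ->
  (s <= x -> a s <= s) /\ (x <= s -> b s <= s).
Proof.
  intros Hs.
  assert (Hleft : forall t, 0 <= t <= x -> a t <= t).
  { intros t Ht.
    pose proof (increment_le_of_slope_le_1 a a' 0 t ltac:(lra) (fun c _ => Ha c)
                  (fun c Hc => slope_bound_left c ltac:(lra))). lra. }
  split; intros Hsx; [apply Hleft; lra|].
  pose proof (increment_le_of_slope_le_1 b b' x s Hsx (fun c _ => Hb c)
                (fun c Hc => slope_bound_right c ltac:(lra))).
  pose proof (Hleft x ltac:(lra)). lra.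
Qed.

End GreenSection.

Lemma green_bounds (q : R -> R) (G : R -> R -> R) :
  (forall s, 0 <= q s) -> is_Green q G ->
  (forall x, 0 <= x <= 1 -> forall a a' b b',
     is_Green_section q x (fun s => G s x) a a' b b' ->
     forall s, 0 <= s <= 1 ->
       (s <= x -> Rabs (a' s) <= 1) /\ (x <= s -> Rabs (b' s) <= 1)) /\
  (forall s x, 0 < s <= 1 -> 0 <= x <= 1 -> G s x / s <= 1).
Proof.
  intros Hq HG. split.
  - intros x Hx a a' b b' (Ha & Ha' & Hb & Hb' & Hga & Hgb & Hg0 & Hb1 & Hj) s Hs.
    assert (Ha0 : a 0 = 0) by (rewrite <- Hga by lra; exact Hg0).
    assert (Hab : a x = b x) by (rewrite <- Hga, <- Hgb by lra; reflexivity).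
    split; intros.
    + apply (slope_bound_left q a a' b b' x); auto; lra.
    + apply (slope_bound_right q a a' b b' x); auto; lra.
  - intros s x Hs Hx.
    destruct (HG x Hx) as (a & a' & b & b' & Ha & Ha' & Hb & Hb' & Hga & Hgb & Hg0 & Hb1 & Hj).
    assert (Ha0 : a 0 = 0) by (rewrite <- Hga by lra; exact Hg0).
    assert (Hab : a x = b x) by (rewrite <- Hga, <- Hgb by lra; reflexivity).
    destruct (pieces_below_diagonal q a a' b b' x Hq Hx Ha Ha' Hb Hb' Ha0 Hb1 Hab Hj s
                ltac:(lra)) as [Hleft Hright].
    assert (Hle : G s x <= s).
    { destruct (Rle_dec s x) as [Hsx|Hsx].
      - rewrite Hga by lra. apply Hleft. lra.
      - rewrite Hgb by lra. apply Hright. lra. }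
    apply Rmult_le_reg_r with s; [lra|]. field_simplify; lra.
Qed.

Lemma sumR_ext (n : nat) (f g : nat -> R) :
  (forall t, (t < n)%nat -> f t = g t) -> sumR n f = sumR n g.
Proof.
  induction n as [|n IH]; simpl; intros H; [reflexivity|].
  rewrite IH, H by (try intros; try apply H; lia). reflexivity.
Qed.

Lemma sumR_scal (n : nat) (c : R) (f : nat -> R) :
  sumR n (fun t => c * f t) = c * sumR n f.
Proof. induction n as [|n IH]; simpl; [ring|]. rewrite IH. ring. Qed.

Lemma sumR_nonneg (n : nat) (f : nat -> R) :
  (forall t, (t < n)%nat -> 0 <= f t) -> 0 <= sumR n f.
Proof.
  induction n as [|n IH]; simpl; intros H; [lra|].
  pose proof (IH (fun t Ht => H t ltac:(lia))). pose proof (H n ltac:(lia)). lra.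
Qed.

Lemma prodR_ext (n : nat) (f g : nat -> R) : (forall t, f t = g t) -> prodR n f = prodR n g.
Proof. induction n as [|n IH]; simpl; intros H; [reflexivity|]. rewrite IH, H; auto. Qed.

Lemma prodR_add (m k : nat) (f : nat -> R) :
  prodR (m + k) f = prodR m f * prodR k (fun t => f (m + t)%nat).
Proof.
  induction k as [|k IH]; simpl; [rewrite Nat.add_0_r; ring|].
  rewrite Nat.add_succ_r. simpl. rewrite IH. ring.
Qed.

(* Unit vectors have inner product at most 1, since
   <u,v> <= (|u|^2 + |v|^2) / 2; this gives alpha_m <= 1. *)
Lemma dot_le_1_of_unit (d : nat) (u v : nat -> R) :
  normR d u = 1 -> normR d v = 1 -> dotR d u v <= 1.
Proof.
  assert (Hamgm : dotR d u v <= (dotR d u u + dotR d v v) / 2).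
  { unfold dotR. induction d as [|d IH]; simpl; [lra|].
    pose proof (pow2_ge_0 (u d - v d)). nra. }
  assert (Hsq : forall w, normR d w = 1 -> dotR d w w = 1).
  { intros w Hw. unfold normR in Hw.
    assert (Hpos : 0 <= dotR d w w) by (unfold dotR; apply sumR_nonneg; intros; nra).
    pose proof (sqrt_sqrt _ Hpos) as E. rewrite Hw in E. lra. }
  intros Hu Hv. rewrite (Hsq u Hu), (Hsq v Hv) in Hamgm. lra.
Qed.

(* The algebraic core of the induction for S_k (1 - r_k) <= 1: with
   x = r_k, y = r_{k+1}, b = beta_{k+1} = 2 - alpha_{k+1} r_{k+1} and
   x b = alpha_k <= 1, the bound propagates from S to x^2 S + 1/b. *)
Lemma deficit_step (S x y b a : R) :
  0 <= S -> 0 <= x -> x * b <= 1 -> 0 <= a <= 1 -> 0 <= y <= 1 -> b = 2 - a * y ->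
  S * (1 - x) <= 1 -> (x ^ 2 * S + 1 / b) * (1 - y) <= 1.
Proof.
  intros HS Hx Hxb Ha Hy Hb Hdef.
  assert (Hb1 : 1 - y <= b - 1) by nra.
  assert (Hxb1 : x * (b - 1) <= 1 - x) by lra.
  assert (Hx2 : x ^ 2 * S * (1 - y) * b <= S * (1 - x)).
  { apply Rle_trans with ((x * b) * (S * (x * (b - 1)))).
    - replace (x ^ 2 * S * (1 - y) * b) with ((x * b) * (S * (x * (1 - y)))) by ring.
      apply Rmult_le_compat_l; [nra|]. apply Rmult_le_compat_l; [lra|].
      apply Rmult_le_compat_l; lra.
    - assert (0 <= S * (x * (b - 1))) by (apply Rmult_le_pos; nra).
      apply Rle_trans with (S * (x * (b - 1))); [nra|]. apply Rmult_le_compat_l; lra. }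
  replace ((x ^ 2 * S + 1 / b) * (1 - y)) with ((x ^ 2 * S * (1 - y) * b + (1 - y)) / b)
    by (field; lra).
  apply Rmult_le_reg_r with b; [lra|]. field_simplify; lra.
Qed.

Section DiscreteGreen.
Variables (n : nat) (alpha : nat -> R).
Local Notation beta := (betaD n alpha).
Local Notation p := (pD n alpha).

Lemma beta_rec (i : nat) : (1 <= i <= n - 1)%nat -> beta i = 2 - alpha i ^ 2 / beta (S i).
Proof.
  intros Hi. unfold betaD. replace (n - i)%nat with (S (n - S i)) by lia.
  cbn [betaRev]. replace (n - S (n - S i))%nat with i by lia. reflexivity.
Qed.

(* r_m = alpha_m / beta_{m+1}, so that p_ij = r_i ... r_{j-1}. *)
Definition ratio (m : nat) : R := alpha m / beta (S m).

Lemma p_refl (i : nat) : p i i = 1.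
Proof. unfold pD. rewrite Nat.sub_diag. reflexivity. Qed.

Lemma p_succ (i j : nat) : (i <= j)%nat -> p i (S j) = p i j * ratio j.
Proof.
  intros H. unfold pD. replace (S j - i)%nat with (S (j - i)) by lia.
  cbn [prodR]. replace (i + (j - i))%nat with j by lia. reflexivity.
Qed.

Lemma p_mul (i m j : nat) : (i <= m <= j)%nat -> p i j = p i m * p m j.
Proof.
  intros H. unfold pD. replace (j - i)%nat with ((m - i) + (j - m))%nat by lia.
  rewrite prodR_add. f_equal. apply prodR_ext. intros t.
  replace (i + (m - i + t))%nat with (m + t)%nat by lia. reflexivity.
Qed.

(* nGreen k j = n G_kj (including nGreen 0 j = 0) and diagG k = n G_kk. *)
Definition nGreen (k j : nat) : R :=
  sumR (Nat.min j k) (fun t => p (S t) j * p (S t) k / beta (S t)).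
Definition diagG (k : nat) : R := sumR k (fun t => p (S t) k ^ 2 / beta (S t)).

Lemma nGreen_0 (j : nat) : nGreen 0 j = 0.
Proof. unfold nGreen. rewrite Nat.min_0_r. reflexivity. Qed.

Lemma nGreen_GD (k j : nat) : (1 <= n)%nat -> INR n * GD n alpha k j = nGreen k j.
Proof.
  intros Hn. destruct k as [|k]; [rewrite nGreen_0; simpl; ring|].
  unfold GD, nGreen. rewrite <- Rmult_assoc, Rinv_r, Rmult_1_l; auto.
  apply not_0_INR. lia.
Qed.

Lemma nGreen_below (k j : nat) : (k <= j)%nat -> nGreen k j = p k j * diagG k.
Proof.
  intros H. unfold nGreen, diagG. rewrite Nat.min_r, <- sumR_scal by lia.
  apply sumR_ext. intros t Ht. rewrite (p_mul (S t) k j) by lia. unfold Rdiv. ring.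
Qed.

Lemma nGreen_above (k j : nat) : (j <= k)%nat -> nGreen k j = p j k * diagG j.
Proof.
  intros H. unfold nGreen, diagG. rewrite Nat.min_l, <- sumR_scal by lia.
  apply sumR_ext. intros t Ht. rewrite (p_mul (S t) j k) by lia. unfold Rdiv. ring.
Qed.

Lemma diagG_succ (m : nat) : diagG (S m) = ratio m ^ 2 * diagG m + 1 / beta (S m).
Proof.
  unfold diagG. cbn [sumR]. rewrite p_refl, <- sumR_scal.
  replace (1 ^ 2 / beta (S m)) with (1 / beta (S m)) by (unfold Rdiv; ring).
  f_equal. apply sumR_ext. intros t Ht. rewrite p_succ by lia. unfold Rdiv. ring.
Qed.

Hypothesis Halpha : forall m, (1 <= m <= n - 1)%nat -> 0 <= alpha m <= 1.

Lemma beta_ge_1 (i : nat) : (1 <= i <= n)%nat -> 1 <= beta i.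
Proof.
  assert (Hrev : forall t, (t <= n - 1)%nat -> 1 <= betaRev n alpha t).
  { induction t as [|t IH]; intros Ht; simpl; [lra|].
    specialize (IH ltac:(lia)). pose proof (Halpha (n - S t)%nat ltac:(lia)).
    assert (alpha (n - S t)%nat ^ 2 / betaRev n alpha t <= 1).
    { apply Rmult_le_reg_r with (betaRev n alpha t); [lra|]. field_simplify; nra. }
    lra. }
  intros Hi. apply Hrev. lia.
Qed.

Lemma inv_beta_bounds (i : nat) : (1 <= i <= n)%nat -> 0 < 1 / beta i <= 1.
Proof.
  intros Hi. pose proof (beta_ge_1 i Hi). split.
  - apply Rdiv_lt_0_compat; lra.
  - apply Rmult_le_reg_r with (beta i); [lra|]. field_simplify; lra.
Qed.

Lemma ratio_bounds (m : nat) : (1 <= m <= n - 1)%nat ->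
  0 <= ratio m <= 1 /\ ratio m * beta (S m) = alpha m.
Proof.
  intros Hm. pose proof (beta_ge_1 (S m) ltac:(lia)). pose proof (Halpha m Hm).
  unfold ratio. split; [split|].
  - apply Rmult_le_pos; [lra|]. left. apply Rinv_0_lt_compat. lra.
  - apply Rmult_le_reg_r with (beta (S m)); [lra|]. field_simplify; lra.
  - field. lra.
Qed.

Lemma p_bounds (i j : nat) : (1 <= i <= j)%nat -> (j <= n)%nat -> 0 <= p i j <= 1.
Proof.
  intros Hij Hj. induction j as [|j IH]; [lia|].
  destruct (Nat.eq_dec i (S j)) as [->|Hne]; [rewrite p_refl; lra|].
  rewrite p_succ by lia. specialize (IH ltac:(lia) ltac:(lia)).
  pose proof (ratio_bounds j ltac:(lia)) as [Hr _]. nra.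
Qed.

Lemma diagG_nonneg (m : nat) : (m <= n)%nat -> 0 <= diagG m.
Proof.
  intros Hm. apply sumR_nonneg. intros t Ht.
  pose proof (inv_beta_bounds (S t) ltac:(lia)).
  replace (p (S t) m ^ 2 / beta (S t)) with (p (S t) m ^ 2 * (1 / beta (S t)))
    by (unfold Rdiv; ring).
  apply Rmult_le_pos; [apply pow2_ge_0|lra].
Qed.

Lemma diagG_one : diagG 1 = 1 / beta 1.
Proof. rewrite diagG_succ. unfold diagG. simpl. ring. Qed.

Lemma diagG_deficit (m : nat) : (1 <= m <= n - 1)%nat -> diagG m * (1 - ratio m) <= 1.
Proof.
  induction m as [|m IH]; intros Hm; [lia|].
  destruct (Nat.eq_dec m 0) as [->|Hm0].
  - rewrite diagG_one. pose proof (inv_beta_bounds 1 ltac:(lia)).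
    pose proof (ratio_bounds 1 Hm) as [Hr _]. nra.
  - rewrite diagG_succ.
    pose proof (ratio_bounds m ltac:(lia)) as [Hx Hxb].
    pose proof (ratio_bounds (S m) Hm) as [Hy Hyb].
    apply (deficit_step _ _ _ _ (alpha (S m)) (diagG_nonneg m ltac:(lia)) (proj1 Hx));
      auto; [rewrite Hxb; apply Halpha; lia | |].
    + rewrite beta_rec by lia. rewrite <- Hyb. field.
      pose proof (beta_ge_1 (S (S m)) ltac:(lia)). lra.
    + apply IH. lia.
Qed.

(* S_{m+1} >= r_m S_m, i.e. S_m r_m (1 - r_m) <= 1/beta_{m+1}. *)
Lemma diagG_growth (m : nat) : (1 <= m <= n - 1)%nat -> ratio m * diagG m <= diagG (S m).
Proof.
  intros Hm. rewrite diagG_succ.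
  pose proof (diagG_deficit m Hm). pose proof (diagG_nonneg m ltac:(lia)).
  pose proof (ratio_bounds m Hm) as [Hx Hxb].
  pose proof (beta_ge_1 (S m) ltac:(lia)).
  assert (ratio m * (1 - ratio m) * diagG m <= 1 / beta (S m)).
  { apply Rmult_le_reg_r with (beta (S m)); [lra|].
    replace (ratio m * (1 - ratio m) * diagG m * beta (S m))
      with ((ratio m * beta (S m)) * (diagG m * (1 - ratio m))) by ring.
    rewrite Hxb. field_simplify; [|lra].
    pose proof (Halpha m Hm). assert (0 <= diagG m * (1 - ratio m)) by nra. nra. }
  nra.
Qed.

Lemma p_diagG_le (j k : nat) : (1 <= j <= k)%nat -> (k <= n)%nat -> p j k * diagG j <= diagG k.
Proof.
  intros Hjk Hk. induction k as [|k IH]; [lia|].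
  destruct (Nat.eq_dec j (S k)) as [->|Hne]; [rewrite p_refl; lra|].
  rewrite p_succ by lia. specialize (IH ltac:(lia) ltac:(lia)).
  pose proof (diagG_growth k ltac:(lia)).
  pose proof (ratio_bounds k ltac:(lia)) as [Hr _]. nra.
Qed.

Lemma increment_first (j : nat) : (1 <= j <= n)%nat -> 0 <= nGreen 1 j - nGreen 0 j <= 1.
Proof.
  intros Hj. rewrite nGreen_0, nGreen_below, diagG_one by lia.
  pose proof (inv_beta_bounds 1 ltac:(lia)). pose proof (p_bounds 1 j ltac:(lia) ltac:(lia)).
  nra.
Qed.

(* For 2 <= k <= j: increment = p_kj (1/beta_k - r_{k-1} (1 - r_{k-1}) S_{k-1}). *)
Lemma increment_below (k j : nat) : (1 <= k)%nat -> (S k <= j <= n)%nat ->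
  Rabs (nGreen (S k) j - nGreen k j) <= 1.
Proof.
  intros Hk Hkj. rewrite !nGreen_below by lia.
  rewrite (p_mul k (S k) j), p_succ, p_refl, diagG_succ by lia.
  pose proof (diagG_deficit k ltac:(lia)). pose proof (diagG_nonneg k ltac:(lia)).
  pose proof (ratio_bounds k ltac:(lia)) as [Hr _].
  pose proof (inv_beta_bounds (S k) ltac:(lia)).
  pose proof (p_bounds (S k) j ltac:(lia) ltac:(lia)).
  assert (0 <= ratio k * (1 - ratio k) * diagG k <= 1).
  { replace (ratio k * (1 - ratio k) * diagG k) with (ratio k * (diagG k * (1 - ratio k)))
      by ring.
    assert (0 <= diagG k * (1 - ratio k)) by nra. split; nra. }
  apply Rabs_le.
  replace (p (S k) j * (ratio k ^ 2 * diagG k + 1 / beta (S k)) - 1 * ratio k * p (S k) j * diagG k)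
    with (p (S k) j * (1 / beta (S k) - ratio k * (1 - ratio k) * diagG k)) by ring.
  split; nra.
Qed.

(* For j <= k < n: increment = p_jk S_j (r_k - 1), and p_jk S_j <= S_k. *)
Lemma increment_above (k j : nat) : (1 <= j <= k)%nat -> (S k <= n)%nat ->
  -1 <= nGreen (S k) j - nGreen k j <= 0.
Proof.
  intros Hjk Hk. rewrite !nGreen_above, p_succ by lia.
  pose proof (p_diagG_le j k Hjk ltac:(lia)).
  pose proof (diagG_deficit k ltac:(lia)).
  pose proof (ratio_bounds k ltac:(lia)) as [Hr _].
  pose proof (p_bounds j k Hjk ltac:(lia)). pose proof (diagG_nonneg j ltac:(lia)).
  assert (0 <= p j k * diagG j) by nra.
  split; nra.
Qed.

Lemma increment_bound (k j : nat) : (1 <= j <= n)%nat -> (1 <= k <= n)%nat ->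
  Rabs (nGreen k j - nGreen (k - 1) j) <= 1.
Proof.
  intros Hj Hk. destruct k as [|k]; [lia|]. replace (S k - 1)%nat with k by lia.
  destruct (Nat.eq_dec k 0) as [->|Hk0].
  - pose proof (increment_first j Hj). apply Rabs_le. lra.
  - destruct (Nat.le_gt_cases (S k) j).
    + apply increment_below; lia.
    + pose proof (increment_above k j ltac:(lia) ltac:(lia)). apply Rabs_le. lra.
Qed.

Lemma nGreen_le_index (k j : nat) : (1 <= j <= n)%nat -> (k <= n)%nat -> nGreen k j <= INR k.
Proof.
  intros Hj. induction k as [|k IH]; intros Hk; [rewrite nGreen_0; simpl; lra|].
  pose proof (increment_bound (S k) j Hj ltac:(lia)) as Hinc.
  replace (S k - 1)%nat with k in Hinc by lia.
  pose proof (Rle_abs (nGreen (S k) j - nGreen k j)). rewrite S_INR. specialize (IH ltac:(lia)). lra.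
Qed.

End DiscreteGreen.

Theorem proposition3p3 :
  (* (a) *)
  (forall (d : nat) (eta eta1 eta2 : nat -> R -> R) (G : R -> R -> R),
     (forall c s, (c < d)%nat -> derivable_pt_lim (eta c) s (eta1 c s)) ->
     (forall c s, (c < d)%nat -> derivable_pt_lim (eta1 c) s (eta2 c s)) ->
     (forall c, (c < d)%nat -> smooth (eta2 c)) ->
     let q := fun s => (normR d (fun c => eta2 c s)) ^ 2 in
     is_Green q G ->
     (forall x, 0 <= x <= 1 -> forall a a' b b',
        is_Green_section q x (fun s => G s x) a a' b b' ->
        forall s, 0 <= s <= 1 ->
          (s <= x -> Rabs (a' s) <= 1) /\ (x <= s -> Rabs (b' s) <= 1)) /\
     (forall s x, 0 < s <= 1 -> 0 <= x <= 1 -> G s x / s <= 1)) /\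
  (* (b) *)
  (forall (d n : nat) (eta : nat -> nat -> R),
     (forall c, (c < d)%nat -> eta (S n) c = 0) ->
     (forall k, (1 <= k <= n)%nat -> normR d (gradp n eta k) = 1) ->
     (forall k, (1 <= k <= n - 1)%nat -> 0 <= alphaD d n eta k) ->
     forall j k, (1 <= j <= n)%nat -> (1 <= k <= n)%nat ->
       Rabs (INR n * (GD n (alphaD d n eta) k j - GD n (alphaD d n eta) (k - 1) j)) <= 1 /\
       INR n * GD n (alphaD d n eta) k j / INR k <= 1).
Proof.
  split.
  - intros d eta eta1 eta2 G _ _ _ q. apply green_bounds.
    intros s. apply pow2_ge_0.
  - intros d n eta _ Hunit Hpos j k Hj Hk.
    set (alpha := alphaD d n eta).
    assert (Halpha : forall m, (1 <= m <= n - 1)%nat -> 0 <= alpha m <= 1).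
    { intros m Hm. split; [apply Hpos; exact Hm|].
      apply dot_le_1_of_unit; apply Hunit; lia. }
    rewrite Rmult_minus_distr_l, !nGreen_GD by lia. split.
    + exact (increment_bound n alpha Halpha k j Hj Hk).
    + pose proof (nGreen_le_index n alpha Halpha k j Hj ltac:(lia)).
      assert (0 < INR k) by (apply lt_0_INR; lia).
      apply Rmult_le_reg_r with (INR k); [lra|]. field_simplify; lra.
Qed.
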